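(* Let $m,n,p,q\in\mathbb{R}$ with $m<0$, and let $P(t)=t^5+mt^3+nt^2+pt+q$. Set $u=\frac{2\sqrt{-m}}{\sqrt5}$, $\alpha=\frac{16n}{u^3}$, $\beta=\frac{16p}{u^4}-5$, $\gamma=\frac{16q}{u^5}$, and $f(\theta)=\alpha\cos^2\theta+\beta\cos\theta+\cos 5\theta+\gamma$. Let $N_{\mathrm{int}}$ be the number of zeros of $f$ in $[0,\pi]$ and $N_{\mathrm{ext}}$ the number of real roots of $P$ outside $[-u,u]$. Then all five roots of $P(t)=0$ are real if and only if $N_{\mathrm{int}}+N_{\mathrm{ext}}=5$. Moreover, if $f(0)\ge 0$, $f(\pi)\le 0$, and $f$ has five zeros in $[0,\pi]$, then all five roots of $P$ lie in $[-u,u]$, and they are $t_k=u\cos\theta_k$, $k=1,\dots,5$, where $0\le\theta_1<\cdots<\theta_5\le\pi$ are the five zeros of $f$.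
   Context: Roots of $P$ are its complex roots; $P$ has real coefficients, so nonreal roots occur in conjugate pairs. Note $f(0)=\alpha+\beta+1+\gamma$ and $f(\pi)=\alpha-\beta-1+\gamma$. *)

From Stdlib Require Import Reals Lra List.
From Coquelicot Require Import Coquelicot.
Open Scope R_scope.

Definition has_card {T : Type} (S : T -> Prop) (k : nat) : Prop :=
  exists l : list T, NoDup l /\ length l = k /\ (forall x, S x <-> In x l).

Definition Pr (m n p q t : R) : R := t ^ 5 + m * t ^ 3 + n * t ^ 2 + p * t + q.

Definition Pc (m n p q : R) (z : C) : C :=
  (z * z * z * z * z + RtoC m * (z * z * z) + RtoC n * (z * z)
   + RtoC p * z + RtoC q)%C.

Definition uu (m : R) : R := 2 * sqrt (- m) / sqrt 5.
Definition alpha (m n : R) : R := 16 * n / (uu m) ^ 3.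
Definition beta (m p : R) : R := 16 * p / (uu m) ^ 4 - 5.
Definition gamma (m q : R) : R := 16 * q / (uu m) ^ 5.

Definition ff (m n p q θ : R) : R :=
  alpha m n * (cos θ) ^ 2 + beta m p * cos θ + cos (5 * θ) + gamma m q.

Definition Zint (m n p q : R) (θ : R) : Prop :=
  0 <= θ <= PI /\ ff m n p q θ = 0.

Definition Zext (m n p q : R) (t : R) : Prop :=
  Pr m n p q t = 0 /\ (t < - uu m \/ uu m < t).

Definition croots (m n p q : R) (z : C) : Prop := Pc m n p q z = RtoC 0.

Definition all_five_roots_real (m n p q : R) : Prop :=
  has_card (croots m n p q) 5 /\ (forall z, croots m n p q z -> Im z = 0).

From Stdlib Require Import Reals Lra Lia List Classical ClassicalEpsilon.
From Coquelicot Require Import Coquelicot.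
Open Scope R_scope.

(* By the Chebyshev identity cos 5θ = 16 cos^5 θ - 20 cos^3 θ + 5 cos θ and
   u^2 = -4m/5, f(θ) = 16 u^-5 P(u cos θ).  As θ ↦ u cos θ maps [0, π]
   bijectively onto [-u, u], N_int counts the real roots of P in [-u, u], so
   N_int + N_ext is the number of distinct real roots of P; and a monic
   quintic with five distinct roots has no other complex root. *)

Lemma Cmult_eq_0 (a b : C) : (a * b)%C = 0%C -> a = 0%C \/ b = 0%C.
Proof.
  intros Hab. destruct (classic (a = 0%C)) as [Ha|Ha]; [now left|].
  destruct (classic (b = 0%C)) as [Hb|Hb]; [now right|].
  exfalso. exact (Cmult_neq_0 a b Ha Hb Hab).
Qed.

Lemma Cminus_eq_0 (a b : C) : (a - b)%C = 0%C -> a = b.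
Proof. intros H. replace a with (a - b + b)%C by ring. rewrite H. ring. Qed.

(* [monic_horner [a_0; ...; a_(d-1)] z = z^d + a_(d-1) z^(d-1) + ... + a_0]. *)
Fixpoint monic_horner (l : list C) (z : C) : C :=
  match l with nil => 1%C | a :: l' => (a + z * monic_horner l' z)%C end.

Lemma monic_horner_div (l : list C) (a r : C) : exists l', length l' = length l /\
  forall z, monic_horner (a :: l) z =
            ((z - r) * monic_horner l' z + monic_horner (a :: l) r)%C.
Proof.
  revert a. induction l as [|b l IH]; intros a.
  - exists nil. split; [reflexivity|]. intros z. simpl. ring.
  - destruct (IH b) as [l' [Hlen Hdiv]].
    exists (monic_horner (b :: l) r :: l'). split; [simpl; now rewrite Hlen|].
    intros z. change (monic_horner (a :: b :: l) ?w)
      with (a + w * monic_horner (b :: l) w)%C.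
    rewrite Hdiv. simpl. ring.
Qed.

Lemma monic_horner_factor (l : list C) (r : C) : monic_horner l r = 0%C ->
  exists l', length l = S (length l') /\
             forall z, monic_horner l z = ((z - r) * monic_horner l' z)%C.
Proof.
  destruct l as [|a l]; intros Hr.
  - exfalso. simpl in Hr. injection Hr. lra.
  - destruct (monic_horner_div l a r) as [l' [Hlen Hdiv]].
    exists l'. split; [simpl; auto|]. intros z. rewrite Hdiv, Hr. ring.
Qed.

Lemma monic_horner_roots_finite (l : list C) :
  exists L, forall z, monic_horner l z = 0%C -> In z L.
Proof.
  remember (length l) as d eqn:Hd. revert l Hd.
  induction d as [|d IH]; intros l Hd.
  - exists nil. intros z Hz. destruct l; [|discriminate].
    simpl in Hz. injection Hz. lra.
  - destruct (classic (exists r, monic_horner l r = 0%C)) as [[r Hr]|Hno].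
    + destruct (monic_horner_factor l r Hr) as [l' [Hlen Hfac]].
      destruct (IH l') as [L HL]; [lia|]. exists (r :: L). intros z Hz.
      rewrite Hfac in Hz. destruct (Cmult_eq_0 _ _ Hz) as [H0|H0].
      * left. symmetry. now apply Cminus_eq_0.
      * right. auto.
    + exists nil. intros z Hz. apply Hno. eauto.
Qed.

Lemma monic_horner_root_in (l : list C) (rs : list C) :
  NoDup rs -> (forall r, In r rs -> monic_horner l r = 0%C) ->
  (length l <= length rs)%nat ->
  forall z, monic_horner l z = 0%C -> In z rs.
Proof.
  revert l. induction rs as [|r rs IH]; intros l Hnd Hroots Hlen z Hz.
  - destruct l; [|simpl in Hlen; lia]. simpl in Hz. injection Hz. lra.
  - destruct (monic_horner_factor l r (Hroots r (or_introl eq_refl)))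
      as [l' [Hl' Hfac]].
    apply NoDup_cons_iff in Hnd as [Hr Hnd].
    rewrite Hfac in Hz. destruct (Cmult_eq_0 _ _ Hz) as [H0|H0].
    + left. symmetry. now apply Cminus_eq_0.
    + right. apply (IH l'); auto; [|simpl in Hlen; lia].
      intros r' Hin. assert (Hr' := Hroots r' (or_intror Hin)).
      rewrite Hfac in Hr'. destruct (Cmult_eq_0 _ _ Hr') as [H1|H1]; auto.
      exfalso. apply Hr. apply Cminus_eq_0 in H1. now subst.
Qed.

Lemma has_card_of_incl {T : Type} (S : T -> Prop) (L : list T) :
  (forall x y : T, {x = y} + {x <> y}) -> (forall x, S x -> In x L) ->
  exists k, has_card S k.
Proof.
  intros dec HL.
  set (sel := fun x => if excluded_middle_informative (S x) then true else false).
  set (L' := nodup dec (filter sel L)).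
  exists (length L'), L'. split; [apply NoDup_nodup|]. split; [reflexivity|].
  intros x. unfold L'. rewrite nodup_In, filter_In. unfold sel.
  destruct (excluded_middle_informative (S x)) as [Hx|Hx]; split.
  - auto.
  - tauto.
  - tauto.
  - intros [_ Hfalse]. discriminate.
Qed.

Lemma RtoC_inj (x y : R) : RtoC x = RtoC y -> x = y.
Proof. intros H. now injection H. Qed.

Lemma NoDup_map_RtoC (l : list R) : NoDup l -> NoDup (map RtoC l).
Proof.
  apply NoDup_map_NoDup_ForallPairs. intros x y _ _. apply RtoC_inj.
Qed.

Definition Pc_coefs (m n p q : R) : list C :=
  RtoC q :: RtoC p :: RtoC n :: RtoC m :: RtoC 0 :: nil.

Lemma Pc_monic_horner m n p q z : Pc m n p q z = monic_horner (Pc_coefs m n p q) z.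
Proof. unfold Pc, Pc_coefs. simpl. ring. Qed.

Lemma Pc_RtoC m n p q t : Pc m n p q (RtoC t) = RtoC (Pr m n p q t).
Proof.
  unfold Pc, Pr. rewrite <- !RtoC_mult, <- !RtoC_plus. f_equal. ring.
Qed.

Lemma croots_RtoC m n p q t : croots m n p q (RtoC t) <-> Pr m n p q t = 0.
Proof.
  unfold croots. rewrite Pc_RtoC. split; intros H.
  - now apply RtoC_inj.
  - now rewrite H.
Qed.

Lemma croots_of_five_real_roots m n p q (l : list R) :
  NoDup l -> length l = 5%nat -> (forall t, In t l -> Pr m n p q t = 0) ->
  forall z, croots m n p q z <-> In z (map RtoC l).
Proof.
  intros Hnd Hlen Hroots.
  assert (HrootsC : forall r, In r (map RtoC l) ->
                    monic_horner (Pc_coefs m n p q) r = 0%C).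
  { intros r Hr. apply in_map_iff in Hr as [t [<- Ht]].
    rewrite <- Pc_monic_horner. apply croots_RtoC; auto. }
  intros z. unfold croots. rewrite Pc_monic_horner. split; intros Hz.
  - apply (monic_horner_root_in _ _ (NoDup_map_RtoC l Hnd) HrootsC); auto.
    rewrite length_map, Hlen. simpl. lia.
  - auto.
Qed.

Lemma real_roots_finite m n p q : exists L : list R,
  forall t, Pr m n p q t = 0 -> In t L.
Proof.
  destruct (monic_horner_roots_finite (Pc_coefs m n p q)) as [L HL].
  exists (map Re L). intros t Ht. change t with (Re (RtoC t)).
  apply in_map, HL. rewrite <- Pc_monic_horner. now apply croots_RtoC.
Qed.

Lemma all_five_roots_real_iff m n p q (l : list R) :
  NoDup l -> (forall t, Pr m n p q t = 0 <-> In t l) ->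
  (all_five_roots_real m n p q <-> length l = 5%nat).
Proof.
  intros Hnd Hl. split.
  - intros [[lc [Hndc [Hlenc Hlc]]] Hreal].
    assert (Hsub : incl (map RtoC l) lc).
    { intros z Hz. apply in_map_iff in Hz as [t [<- Ht]].
      apply Hlc, croots_RtoC, Hl, Ht. }
    assert (Hsup : incl lc (map RtoC l)).
    { intros z Hz. apply Hlc in Hz.
      assert (Ez : z = RtoC (Re z)).
      { specialize (Hreal z Hz). destruct z as [a b]. unfold RtoC. simpl in *. congruence. }
      rewrite Ez in Hz |- *. apply in_map, Hl, croots_RtoC, Hz. }
    apply NoDup_incl_length in Hsub; [|now apply NoDup_map_RtoC].
    apply NoDup_incl_length in Hsup; auto.
    rewrite length_map in *. lia.
  - intros Hlen.
    assert (Hall := croots_of_five_real_roots m n p q l Hnd Hlen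
                      (fun t Ht => proj2 (Hl t) Ht)).
    split.
    + exists (map RtoC l). split; [now apply NoDup_map_RtoC|].
      split; [now rewrite length_map|]. exact Hall.
    + intros z Hz. apply Hall, in_map_iff in Hz as [t [<- _]]. reflexivity.
Qed.

Lemma cos_5x x : cos (5 * x) = 16 * cos x ^ 5 - 20 * cos x ^ 3 + 5 * cos x.
Proof.
  replace (5 * x) with (2 * (2 * x) + x) by ring.
  rewrite cos_plus, sin_2a, cos_2a_cos, sin_2a, cos_2a_cos.
  assert (H := sin2_cos2 x). unfold Rsqr in H.
  replace (2 * (2 * sin x * cos x) * (2 * cos x * cos x - 1) * sin x)
    with (4 * cos x * (2 * cos x * cos x - 1) * (sin x * sin x)) by ring.
  replace (sin x * sin x) with (1 - cos x * cos x) by lra. ring.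
Qed.

Section Quintic.

Variables (m n p q : R).
Hypothesis hm : m < 0.

Lemma uu_pos : 0 < uu m.
Proof.
  unfold uu. assert (0 < sqrt (- m)) by (apply sqrt_lt_R0; lra).
  assert (0 < sqrt 5) by (apply sqrt_lt_R0; lra).
  apply Rdiv_lt_0_compat; lra.
Qed.

Lemma uu_sqr : uu m ^ 2 = - 4 * m / 5.
Proof.
  unfold uu. assert (0 < sqrt 5) by (apply sqrt_lt_R0; lra).
  field_simplify; [|lra]. rewrite <- !Rsqr_pow2, !Rsqr_sqrt by lra. field.
Qed.

Lemma ff_Pr θ : ff m n p q θ = 16 / uu m ^ 5 * Pr m n p q (uu m * cos θ).
Proof.
  assert (Hu := uu_pos). assert (Hs := uu_sqr).
  unfold ff, alpha, beta, gamma, Pr. rewrite cos_5x.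
  set (u := uu m) in *. clearbody u.
  replace m with (- 5 / 4 * u ^ 2) by lra. field. lra.
Qed.

Lemma Zint_iff θ :
  Zint m n p q θ <-> 0 <= θ <= PI /\ Pr m n p q (uu m * cos θ) = 0.
Proof.
  assert (Hu := uu_pos). unfold Zint. rewrite ff_Pr.
  assert (Hk : 0 < 16 / uu m ^ 5) by (apply Rdiv_lt_0_compat; [lra|apply pow_lt; lra]).
  split; intros [Hθ Hr]; split; auto.
  - apply Rmult_integral in Hr as [Hr|Hr]; lra.
  - rewrite Hr. ring.
Qed.

Lemma NoDup_map_ucos (l : list R) : (forall θ, In θ l -> 0 <= θ <= PI) ->
  NoDup l -> NoDup (map (fun θ => uu m * cos θ) l).
Proof.
  intros Hl. apply NoDup_map_NoDup_ForallPairs. intros x y Hx Hy Hxy.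
  apply cos_inj; auto. apply Rmult_eq_reg_l with (uu m); [exact Hxy|].
  assert (Hu := uu_pos). lra.
Qed.

Definition Zin (t : R) : Prop := Pr m n p q t = 0 /\ - uu m <= t <= uu m.

Lemma has_card_Zin k : has_card (Zint m n p q) k -> has_card Zin k.
Proof.
  intros [l [Hnd [Hlen Hl]]]. assert (Hu := uu_pos).
  exists (map (fun θ => uu m * cos θ) l). split; [|split].
  - apply NoDup_map_ucos; auto. intros θ Hθ. now apply Hl, Zint_iff in Hθ.
  - now rewrite length_map.
  - intros t. rewrite in_map_iff. split.
    + intros [Ht Hb]. exists (acos (t / uu m)).
      assert (Hb' : -1 <= t / uu m <= 1).
      { split; [apply Rmult_le_reg_r with (uu m)|apply Rmult_le_reg_r with (uu m)];
          auto; field_simplify; lra. }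
      assert (Hc : uu m * cos (acos (t / uu m)) = t)
        by (rewrite cos_acos by exact Hb'; field; lra).
      split; [exact Hc|]. apply Hl, Zint_iff. rewrite Hc. split; [apply acos_bound|exact Ht].
    + intros [θ [<- Hθ]]. apply Hl, Zint_iff in Hθ as [Hθ Hr].
      split; [exact Hr|]. assert (Hc := COS_bound θ). split; nra.
Qed.

Lemma Zint_Zext_finite :
  exists Nint Next, has_card (Zint m n p q) Nint /\ has_card (Zext m n p q) Next.
Proof.
  destruct (real_roots_finite m n p q) as [L HL].
  destruct (has_card_of_incl (Zint m n p q) (map (fun t => acos (t / uu m)) L) Req_EM_T)
    as [Nint Hint].
  { intros θ Hθ. apply Zint_iff in Hθ as [Hθ Hr].
    apply in_map_iff. exists (uu m * cos θ). split; [|now apply HL].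
    assert (Hu := uu_pos).
    replace (uu m * cos θ / uu m) with (cos θ) by (field; lra). now apply acos_cos. }
  destruct (has_card_of_incl (Zext m n p q) L Req_EM_T) as [Next Hext].
  { intros t [Ht _]. auto. }
  eauto.
Qed.

Lemma all_five_roots_real_iff_card Nint Next :
  has_card (Zint m n p q) Nint -> has_card (Zext m n p q) Next ->
  (all_five_roots_real m n p q <-> (Nint + Next = 5)%nat).
Proof.
  intros Hint [le [Hnde [Hle He]]].
  apply has_card_Zin in Hint as [li [Hndi [Hli Hi]]].
  rewrite (all_five_roots_real_iff m n p q (li ++ le)), length_app; [lia| |].
  - apply NoDup_app; auto. intros t Hti Hte.
    apply Hi in Hti as [_ Hti]. apply He in Hte as [_ Hte]. lra.
  - intros t. rewrite in_app_iff, <- Hi, <- He. unfold Zin, Zext.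
    split; [intros Ht|intros [[Ht _]|[Ht _]]; exact Ht].
    destruct (classic (- uu m <= t <= uu m)); [left|right]; split; auto; lra.
Qed.

Lemma croots_in_interval : has_card (Zint m n p q) 5 ->
  forall z, croots m n p q z -> Im z = 0 /\ - uu m <= Re z <= uu m.
Proof.
  intros Hint. apply has_card_Zin in Hint as [li [Hndi [Hli Hi]]].
  intros z Hz. apply (croots_of_five_real_roots m n p q li Hndi Hli) in Hz.
  - apply in_map_iff in Hz as [t [<- Ht]]. apply Hi in Ht as [_ Ht]. now split.
  - intros t Ht. now apply Hi in Ht as [Ht _].
Qed.

Lemma croots_ucos (θs : list R) :
  NoDup θs -> length θs = 5%nat -> (forall θ, Zint m n p q θ <-> In θ θs) ->
  forall z, croots m n p q z <-> In z (map (fun θ => RtoC (uu m * cos θ)) θs).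
Proof.
  intros Hnd Hlen Hθs z. rewrite <- (map_map (fun θ => uu m * cos θ) RtoC).
  apply croots_of_five_real_roots.
  - apply NoDup_map_ucos; auto. intros θ Hθ. now apply Hθs, Zint_iff in Hθ.
  - now rewrite length_map.
  - intros t Ht. apply in_map_iff in Ht as [θ [<- Hθ]]. now apply Hθs, Zint_iff in Hθ.
Qed.

End Quintic.

Theorem theorem1 (m n p q : R) (hm : m < 0) :
  (* N_int and N_ext are well-defined (finite) *)
  (exists Nint Next : nat, has_card (Zint m n p q) Nint /\ has_card (Zext m n p q) Next)
  /\
  (* all five roots real iff N_int + N_ext = 5 *)
  (forall Nint Next : nat,
     has_card (Zint m n p q) Nint -> has_card (Zext m n p q) Next ->
     (all_five_roots_real m n p q <-> (Nint + Next = 5)%nat))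
  /\
  (* the case f(0) >= 0, f(pi) <= 0, five zeros of f in [0, pi] *)
  (ff m n p q 0 >= 0 -> ff m n p q PI <= 0 -> has_card (Zint m n p q) 5 ->
     (forall z : C, croots m n p q z -> Im z = 0 /\ - uu m <= Re z <= uu m)
     /\
     (forall θ1 θ2 θ3 θ4 θ5 : R,
        0 <= θ1 -> θ1 < θ2 -> θ2 < θ3 -> θ3 < θ4 -> θ4 < θ5 -> θ5 <= PI ->
        (forall θ, Zint m n p q θ <-> In θ (θ1 :: θ2 :: θ3 :: θ4 :: θ5 :: nil)) ->
        forall z : C, croots m n p q z <->
          In z (map (fun θ => RtoC (uu m * cos θ))
                    (θ1 :: θ2 :: θ3 :: θ4 :: θ5 :: nil)))).
Proof.
  split; [|split].
  - exact (Zint_Zext_finite m n p q hm).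
  - exact (all_five_roots_real_iff_card m n p q hm).
  - intros _ _ H5. split; [exact (croots_in_interval m n p q hm H5)|].
    intros θ1 θ2 θ3 θ4 θ5 h1 h2 h3 h4 h5 h6 Hθs.
    apply (croots_ucos m n p q hm); [|reflexivity|exact Hθs].
    repeat constructor; simpl; intuition lra.
Qed.
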